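(* Let $n \geq 4$ and let $\mathcal G = G(n;S)$ be a circulant graph on $n$ vertices with symbol $S$. Suppose that $\mathcal G$ has at least four distinct eigenvalues and that its spectrum satisfies the following condition: for all eigenvalues $\lambda_i,\lambda_j,\lambda_r,\lambda_s$ of $\mathcal G$ with $\lambda_r \neq \lambda_s$, $$\frac{\lambda_i-\lambda_j}{\lambda_r-\lambda_s}\in\mathbb{Q}.$$ Then $\mathcal G$ is integral, i.e. all eigenvalues of its adjacency matrix are integers.
   Context: For an integer $n$ and a set $S\subseteq\{1,\dots,n-1\}$ such that $s\in S$ if and only if $n-s\in S$, the circulant graph $G(n;S)$ is the undirected graph on vertex set $\mathbb{Z}_n=\{0,1,\dots,n-1\}$ in which $i$ and $j$ are adjacent iff $i-j \bmod n\in S$; $S$ is called the symbol and $\#S$ the degree. The eigenvalues (spectrum) of a graph are the eigenvalues of its adjacency matrix, listed with multiplicity as $\lambda_0,\dots,\lambda_{n-1}$. A graph is integral if all its eigenvalues are integers. *)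

From HB Require Import structures.
From mathcomp Require Import all_boot all_order all_algebra all_field.
Set Implicit Arguments. Unset Strict Implicit. Unset Printing Implicit Defensive.
Import Order.TTheory GRing.Theory Num.Theory.
Local Open Scope ring_scope.

(* A symbol S for the circulant graph G(n;S): a subset of Z_n (represented by
   'I_n) not containing 0, and closed under s |-> n - s. *)
Definition is_symbol (n : nat) (S : {set 'I_n}) : Prop :=
  (forall s : 'I_n, s \in S -> (0 < val s)%N) /\
  (forall s t : 'I_n, (val s + val t)%N = n -> (s \in S) = (t \in S)).

(* Adjacency matrix of G(n;S) over the algebraic complex numbers:
   i ~ j iff (i - j mod n) \in S. *)
Definition circulant_adj (n : nat) (S : {set 'I_n}) : 'M[algC]_n :=
  \matrix_(i < n, j < n)
    (([exists s in S, val s == ((val i + n - val j) %% n)%N]) : nat)%:R.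

(* Every eigenvalue of G(n;S) is an algebraic integer, since the adjacency
   matrix has integer entries, so it suffices to show that every eigenvalue e
   is rational.  The degree k = #S is an eigenvalue (constant eigenvector) and
   the trace is 0, so the n eigenvalues z, counted with multiplicity, sum to 0.
   Summing the rational ratios (z - k) / (e - k) over them gives the rational
   number -nk / (e - k), hence e - k is rational as soon as k <> 0; for k = 0
   the graph has no edges. *)
From HB Require Import structures.
From mathcomp Require Import all_boot all_order all_algebra all_field.
Import Order.TTheory GRing.Theory Num.Theory.
Local Open Scope ring_scope.

Lemma eigenvalue_seq_trace (F : closedFieldType) n (A : 'M[F]_n) :
  exists r : seq F,
    [/\ size r = n, {in r, forall z, eigenvalue A z} & \sum_(z <- r) z = \tr A].
Proof.
have [r Dr] := closed_field_poly_normal (char_poly A).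
rewrite (monicP (char_poly_monic A)) scale1r in Dr.
have sz_r : size r = n.
  by apply: succn_inj; rewrite -(size_prod_XsubC r id) -Dr size_char_poly.
exists r; split=> // [z z_r|]; first by rewrite eigenvalue_root_char Dr root_prod_XsubC.
case: n A Dr sz_r => [|n] A Dr sz_r.
  by rewrite (size0nil sz_r) big_nil /mxtrace big_ord0.
apply: oppr_inj; rewrite -coefPn_prod_XsubC ?sz_r //.
by rewrite -Dr char_poly_trace.
Qed.

Lemma eigenvalue0 (F : fieldType) n (a : F) : eigenvalue (0 : 'M_n) a -> a = 0.
Proof.
case/eigenvalueP=> v; rewrite mulmx0 => /esym/eqP; rewrite scaler_eq0.
by case/orP=> [/eqP // | ->].
Qed.

Lemma eigenvalue_intmx_Aint n (M : 'M[int]_n) (a : algC) :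
  eigenvalue (map_mx intr M) a -> a \in Aint.
Proof.
move=> Ma; apply: (@root_monic_Aint (char_poly (map_mx intr M))).
- by rewrite -eigenvalue_root_char.
- exact: char_poly_monic.
by rewrite -map_char_poly; apply/polyOverP => i; rewrite coef_map intr_int.
Qed.

Lemma eigenvalue_Crat_of_ratios n (A : 'M[algC]_n) (k : algC) :
  k \in Crat -> \tr A \in Crat -> \tr A != k *+ n ->
  (forall z e, eigenvalue A z -> eigenvalue A e -> e != k ->
     (z - k) / (e - k) \in Crat) ->
  forall e, eigenvalue A e -> e \in Crat.
Proof.
move=> kQ trQ tr_neq Hratio e Ae.
have [-> // | e_neq_k] := eqVneq e k.
have ek_neq0 : e - k != 0 by rewrite subr_eq0.
have [r [sz_r Ar sum_r]] := eigenvalue_seq_trace _ _ A.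
pose Q := \sum_(z <- r) (z - k) / (e - k).
have QQ : Q \in Crat.
  by rewrite /Q big_seq; apply: rpred_sum => z /Ar Az; apply: Hratio.
have QE : Q * (e - k) = \tr A - k *+ n.
  rewrite /Q mulr_suml (eq_bigr (fun z => z - k)) => [|z _]; last by rewrite divfK.
  by rewrite sumrB sum_r big_const_seq count_predT iter_addr_0 sz_r.
have Q_neq0 : Q != 0.
  by apply: contraNneq tr_neq => Q0; rewrite -subr_eq0 -QE Q0 mul0r.
have -> : e = (\tr A - k *+ n) / Q + k by rewrite -QE [Q * _]mulrC mulfK // subrK.
by rewrite rpredD // rpred_div // rpredB // rpredMn.
Qed.

Section CirculantAdjacency.

Context {n : nat} (S : {set 'I_n}).

Lemma mxtrace_circulant_adj : is_symbol S -> \tr (circulant_adj S) = 0.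
Proof.
case=> S_gt0 _; rewrite /mxtrace big1 // => i _; rewrite mxE addKn modnn.
by case: existsP => // -[s /andP[/S_gt0 + /eqP s0]]; rewrite s0.
Qed.

Lemma circulant_adj_colsum j : \sum_i circulant_adj S i j = #|S|%:R.
Proof.
have n_gt0 : (0 < n)%N := leq_ltn_trans (leq0n j) (ltn_ord j).
pose shift (i : 'I_n) : 'I_n := Ordinal (ltn_pmod (i + n - j) n_gt0).
have shift_inj : injective shift.
  move=> i i' /(congr1 val) /= /eqP.
  rewrite -!addnBA ?(ltnW (ltn_ord j)) // eqn_modDr !modn_small //.
  by move/eqP; apply: val_inj.
rewrite -sum1_card natr_sum [RHS](reindex_inj shift_inj) [RHS]big_mkcond /=.
apply: eq_bigr => i _; rewrite mxE.
have -> : [exists s in S, val s == val (shift i)] = (shift i \in S).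
  apply/existsP/idP => [[s /andP[sS /eqP/val_inj <-]] // | shiftS].
  by exists (shift i); rewrite shiftS eqxx.
by case: (shift i \in S).
Qed.

Lemma circulant_adj_eigenvalue_card :
  (0 < n)%N -> eigenvalue (circulant_adj S) #|S|%:R.
Proof.
move=> n_gt0; apply/eigenvalueP; exists (const_mx 1).
  apply/matrixP => i j; rewrite !mxE mulr1 -(circulant_adj_colsum j).
  by apply: eq_bigr => k _; rewrite mxE mul1r.
by apply/eqP => /matrixP/(_ 0 (Ordinal n_gt0)); rewrite !mxE => /eqP; rewrite oner_eq0.
Qed.

Lemma circulant_adj_eigenvalue_Aint a :
  eigenvalue (circulant_adj S) a -> a \in Aint.
Proof.
have -> : circulant_adj S = map_mx intr
    (\matrix_(i, j) ([exists s in S, val s == ((val i + n - val j) %% n)%N] : nat)%:Z).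
  by apply/matrixP => i j; rewrite !mxE.
exact: eigenvalue_intmx_Aint.
Qed.

End CirculantAdjacency.

Lemma circulant_adj_set0 n : circulant_adj (set0 : {set 'I_n}) = 0.
Proof.
by apply/matrixP => i j; rewrite !mxE; case: existsP => // -[s]; rewrite inE.
Qed.

Theorem theorem1 (n : nat) (S : {set 'I_n}) :
  (4 <= n)%N ->
  is_symbol S ->
  (exists a b c d : algC,
      [/\ eigenvalue (circulant_adj S) a, eigenvalue (circulant_adj S) b,
          eigenvalue (circulant_adj S) c & eigenvalue (circulant_adj S) d] /\
      uniq [:: a; b; c; d]) ->
  (forall li lj lr ls : algC,
      eigenvalue (circulant_adj S) li -> eigenvalue (circulant_adj S) lj ->
      eigenvalue (circulant_adj S) lr -> eigenvalue (circulant_adj S) ls ->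
      lr != ls -> (li - lj) / (lr - ls) \in Crat) ->
  forall l : algC, eigenvalue (circulant_adj S) l -> l \in Num.int.
Proof.
move=> n_ge4 symS _ Hrat l Al.
apply: Cint_rat_Aint (circulant_adj_eigenvalue_Aint S l Al).
have [S0 | S_neq0] := eqVneq S set0.
  by move: Al; rewrite S0 circulant_adj_set0 => /eigenvalue0 ->; rewrite rpred0.
have n_gt0 : (0 < n)%N := leq_ltn_trans (leq0n 3) n_ge4.
have Ak := circulant_adj_eigenvalue_card S n_gt0.
apply: (eigenvalue_Crat_of_ratios _ _ #|S|%:R) Al.
- exact: rpred_nat.
- by rewrite mxtrace_circulant_adj ?rpred0.
- rewrite mxtrace_circulant_adj // eq_sym -mulrnA pnatr_eq0 muln_eq0 negb_or.
  by rewrite -lt0n card_gt0 S_neq0 -lt0n n_gt0.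
- by move=> z e Az Ae; apply: Hrat.
Qed.
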